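(* Let $\mathbf{k}_1,\dots,\mathbf{k}_N \in \mathbb{R}^d$ (anchor keys), let $\delta:\mathbb{R}^d\to\mathbb{R}^d$ (the drift function), let $\mathbf{z}\in\mathbb{R}^d$ (a query), and let $\tau>0$, $\beta = 1/\tau$. Define the attention weights $p_i = \exp(\beta\mathbf{k}_i^\top\mathbf{z})/\sum_{j=1}^N\exp(\beta\mathbf{k}_j^\top\mathbf{z})$ and the estimate $\hat{\boldsymbol{\delta}}(\mathbf{z}) = \sum_{i=1}^N p_i\,\delta(\mathbf{k}_i)$. Assume there is a constant $L\ge 0$ such that $\|\delta(\mathbf{k}_i)-\delta(\mathbf{z})\| \le L\|\mathbf{k}_i-\mathbf{z}\|$ for all $i=1,\dots,N$. Then $$\|\hat{\boldsymbol{\delta}}(\mathbf{z}) - \delta(\mathbf{z})\| \le L\sum_{i=1}^N p_i\|\mathbf{k}_i-\mathbf{z}\|.$$ Furthermore, if $\|\mathbf{k}_i\| = \|\mathbf{z}\| = 1$ for all $i$, then $$\|\hat{\boldsymbol{\delta}}(\mathbf{z}) - \delta(\mathbf{z})\| \le L\Big(\min_i\|\mathbf{k}_i-\mathbf{z}\| + \sqrt{2\tau\log N}\Big).$$ Moreover, if the attention is restricted to the set $S$ of the $k$ anchors with the largest scores $\mathbf{k}_i^\top\mathbf{z}$ (with the softmax weights renormalized over $S$ and $\hat{\boldsymbol{\delta}}(\mathbf{z}) = \sum_{i\in S}p_i\delta(\mathbf{k}_i)$), then under the same normalization the last bound holds with $N$ replaced by $k$.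
   Context: Norms are Euclidean ($\ell_2$). The quantity $\hat{\boldsymbol{\delta}}(\mathbf{z})$ is the drift estimate of a softmax (dot-product) attention retrieval over anchor keys $\mathbf{k}_i$ whose associated values are the drifts $\delta(\mathbf{k}_i)$; $\tau$ is the softmax temperature. *)

From HB Require Import structures.
From mathcomp Require Import all_boot all_order all_algebra.
From mathcomp Require Import all_classical all_reals all_analysis.
Set Implicit Arguments. Unset Strict Implicit. Unset Printing Implicit Defensive.
Import Order.TTheory GRing.Theory Num.Theory.
Local Open Scope ring_scope.

Section Attn.
Variables (R : realType) (d N : nat).

Definition dotv (u v : 'rV[R]_d) : R := \sum_(l < d) u 0 l * v 0 l.
Definition normv (u : 'rV[R]_d) : R := Num.sqrt (dotv u u).

Definition softmax_w (beta : R) (k : 'I_N -> 'rV[R]_d) (z : 'rV[R]_d)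
    (i : 'I_N) : R :=
  expR (beta * dotv (k i) z) / \sum_(j < N) expR (beta * dotv (k j) z).

Definition attn_est (beta : R) (k : 'I_N -> 'rV[R]_d)
    (delta : 'rV[R]_d -> 'rV[R]_d) (z : 'rV[R]_d) : 'rV[R]_d :=
  \sum_(i < N) softmax_w beta k z i *: delta (k i).

Definition softmax_w_on (S : {set 'I_N}) (beta : R) (k : 'I_N -> 'rV[R]_d)
    (z : 'rV[R]_d) (i : 'I_N) : R :=
  expR (beta * dotv (k i) z) / \sum_(j in S) expR (beta * dotv (k j) z).

Definition attn_est_on (S : {set 'I_N}) (beta : R) (k : 'I_N -> 'rV[R]_d)
    (delta : 'rV[R]_d -> 'rV[R]_d) (z : 'rV[R]_d) : 'rV[R]_d :=
  \sum_(i in S) softmax_w_on S beta k z i *: delta (k i).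

Definition is_topk (kk : nat) (S : {set 'I_N}) (k : 'I_N -> 'rV[R]_d)
    (z : 'rV[R]_d) : Prop :=
  #|S| = kk /\
  forall i j, i \in S -> j \notin S -> dotv (k j) z <= dotv (k i) z.

End Attn.

(* minimum of a sequence of reals (the true minimum when s is nonempty) *)
Definition seqmin (R : realType) (s : seq R) : R :=
  foldr Num.min (head 0 s) s.

Definition min_dist (R : realType) (d N : nat) (k : 'I_N -> 'rV[R]_d)
    (z : 'rV[R]_d) : R :=
  seqmin [seq normv (k i - z) | i <- enum 'I_N].

From HB Require Import structures.
From mathcomp Require Import all_boot all_order all_algebra.
From mathcomp Require Import all_classical all_reals all_analysis.
From mathcomp Require Import ring lra.
Set Implicit Arguments. Unset Strict Implicit. Unset Printing Implicit Defensive.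
Import Order.TTheory GRing.Theory Num.Theory.
Local Open Scope ring_scope.

(* The estimate is a convex combination of the delta (k i), so its error is at
   most the p-average of L * |k i - z|.  For unit vectors
   |k i - z|^2 = 2 - 2 k i . z, so by Jensen the average distance is at most
   sqrt (2 - 2 E_p[k . z]).  The entropy of p equals ln Z - beta E_p[k . z] and
   is at most ln n, while ln Z >= beta * (top score): hence E_p[k . z] is within
   tau ln n of the top score.  For unit vectors the top-scored anchor is also
   the nearest one, and sqrt (a + b) <= sqrt a + sqrt b concludes.  Restricting
   to the top-k set S changes nothing, since S contains the top-scored anchor. *)

Lemma cauchy_schwarz_weighted (R : realDomainType) (I : finType) (A : {pred I})
    (w a b : I -> R) :
  (forall i, i \in A -> 0 <= w i) ->
  (\sum_(i in A) w i * a i * b i) ^+ 2 <=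
    (\sum_(i in A) w i * a i ^+ 2) * (\sum_(i in A) w i * b i ^+ 2).
Proof.
move=> w_ge0.
set Sa := \sum_(i in A) w i * a i ^+ 2; set Sb := \sum_(i in A) w i * b i ^+ 2.
set C := \sum_(i in A) w i * a i * b i.
have lagrange : \sum_(i in A) \sum_(j in A) w i * w j * (a i * b j - a j * b i) ^+ 2
    = 2 * (Sa * Sb - C ^+ 2).
  rewrite [RHS](_ : _ = Sa * Sb + Sb * Sa - C * C - C * C); last by ring.
  rewrite !big_distrlr -big_split -!sumrB; apply: eq_bigr => i _.
  by rewrite -big_split -!sumrB; apply: eq_bigr => j _ /=; ring.
have : 0 <= \sum_(i in A) \sum_(j in A) w i * w j * (a i * b j - a j * b i) ^+ 2.
  by do 2![apply: sumr_ge0 => ? ?]; rewrite mulr_ge0 ?sqr_ge0 ?mulr_ge0 ?w_ge0.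
by rewrite lagrange pmulr_rge0 // subr_ge0.
Qed.

Lemma wmean_le_sqrt_wmean_sq (R : rcfType) (I : finType) (A : {pred I})
    (w r : I -> R) :
  (forall i, i \in A -> 0 <= w i) -> \sum_(i in A) w i = 1 ->
  \sum_(i in A) w i * r i <= Num.sqrt (\sum_(i in A) w i * r i ^+ 2).
Proof.
move=> w_ge0 w_sum1; have := cauchy_schwarz_weighted (fun=> 1) r w_ge0.
have -> : \sum_(i in A) w i * 1 * r i = \sum_(i in A) w i * r i.
  by apply: eq_bigr => i _; rewrite mulr1.
have -> : \sum_(i in A) w i * 1 ^+ 2 = 1 by under eq_bigr do rewrite expr1n mulr1.
rewrite mul1r => cs.
by apply: le_trans (ler_norm _) _; rewrite -sqrtr_sqr ler_wsqrtr.
Qed.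

Lemma sqrtrD_le (R : rcfType) (a b : R) :
  0 <= a -> 0 <= b -> Num.sqrt (a + b) <= Num.sqrt a + Num.sqrt b.
Proof.
move=> a_ge0 b_ge0.
rewrite -[leRHS]ger0_norm ?addr_ge0 ?sqrtr_ge0 // -sqrtr_sqr ler_wsqrtr //.
by rewrite sqrrD !sqr_sqrtr // lerD2r lerDl mulrn_wge0 // mulr_ge0 ?sqrtr_ge0.
Qed.

Section EuclideanNorm.
Variables (R : realType) (d : nat).
Implicit Types (u v x : 'rV[R]_d) (c : R).

Lemma dotvC u v : dotv u v = dotv v u.
Proof. by apply: eq_bigr => l _; rewrite mulrC. Qed.

Lemma dotvDl u v x : dotv (u + v) x = dotv u x + dotv v x.
Proof. by rewrite /dotv -big_split; apply: eq_bigr => l _; rewrite mxE mulrDl. Qed.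

Lemma dotvZl c u v : dotv (c *: u) v = c * dotv u v.
Proof. by rewrite /dotv mulr_sumr; apply: eq_bigr => l _; rewrite mxE mulrA. Qed.

Lemma dotvDr u v x : dotv x (u + v) = dotv x u + dotv x v.
Proof. by rewrite !(dotvC x) dotvDl. Qed.

Lemma dotvZr c u v : dotv u (c *: v) = c * dotv u v.
Proof. by rewrite !(dotvC u) dotvZl. Qed.

Lemma dotvv_ge0 u : 0 <= dotv u u.
Proof. by apply: sumr_ge0 => l _; rewrite -expr2 sqr_ge0. Qed.

Lemma normv_ge0 u : 0 <= normv u.
Proof. exact: sqrtr_ge0. Qed.

Lemma normv_sq u : normv u ^+ 2 = dotv u u.
Proof. by rewrite sqr_sqrtr // dotvv_ge0. Qed.

Lemma normv0 : normv (0 : 'rV[R]_d) = 0.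
Proof. by rewrite /normv /dotv big1 ?sqrtr0 // => l _; rewrite mxE mul0r. Qed.

Lemma normvZ c u : normv (c *: u) = `|c| * normv u.
Proof. by rewrite /normv dotvZl dotvZr mulrA -expr2 sqrtrM ?sqr_ge0 // sqrtr_sqr. Qed.

Lemma normvD_sq u v :
  normv (u + v) ^+ 2 = normv u ^+ 2 + 2 * dotv u v + normv v ^+ 2.
Proof. by rewrite !normv_sq dotvDl !dotvDr (dotvC v u); ring. Qed.

Lemma normvB_sq u v :
  normv (u - v) ^+ 2 = normv u ^+ 2 - 2 * dotv u v + normv v ^+ 2.
Proof.
by rewrite normvD_sq -scaleN1r dotvZr normvZ normrN1 mul1r; ring.
Qed.

Lemma dotv_le_mul_normv u v : dotv u v <= normv u * normv v.
Proof.
have cs : dotv u v ^+ 2 <= dotv u u * dotv v v.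
  have := @cauchy_schwarz_weighted R _ predT (fun=> 1) (u 0) (v 0) (fun _ _ => ler01).
  have sq x : \sum_(l in predT) 1 * x 0 l ^+ 2 = dotv x x.
    by apply: eq_bigr => l _; rewrite mul1r expr2.
  by rewrite !sq; under eq_bigr do rewrite mul1r.
apply: le_trans (ler_norm _) _.
by rewrite -sqrtr_sqr /normv -sqrtrM ?dotvv_ge0 // ler_wsqrtr.
Qed.

Lemma normvD u v : normv (u + v) <= normv u + normv v.
Proof.
rewrite -(ler_pXn2r (isT : (0 < 2)%N)) ?nnegrE ?addr_ge0 ?normv_ge0 //.
by rewrite normvD_sq sqrrD; have := dotv_le_mul_normv u v; lra.
Qed.

Lemma normv_sum (I : finType) (A : {pred I}) (F : I -> 'rV[R]_d) :
  normv (\sum_(i in A) F i) <= \sum_(i in A) normv (F i).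
Proof.
elim/big_rec2: _ => [|i y1 y2 _ IH]; first by rewrite normv0.
by apply: le_trans (normvD _ _) _; rewrite lerD2l.
Qed.

Lemma normv_wmean_sub (I : finType) (A : {pred I}) (w : I -> R)
    (x : I -> 'rV[R]_d) (y : 'rV[R]_d) :
  (forall i, i \in A -> 0 <= w i) -> \sum_(i in A) w i = 1 ->
  normv (\sum_(i in A) w i *: x i - y) <= \sum_(i in A) w i * normv (x i - y).
Proof.
move=> w_ge0 w_sum1.
have -> : \sum_(i in A) w i *: x i - y = \sum_(i in A) w i *: (x i - y).
  rewrite -[X in _ - X = _]scale1r -w_sum1 scaler_suml -sumrB.
  by apply: eq_bigr => i _; rewrite scalerBr.
apply: le_trans (normv_sum _ _) _; apply: ler_sum => i Ai.
by rewrite normvZ ger0_norm ?w_ge0.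
Qed.

End EuclideanNorm.

Lemma ln_le_subr1 (R : realType) (x : R) : 0 < x -> ln x <= x - 1.
Proof.
by move=> x_gt0; have := @le_ln1Dx R (x - 1); rewrite addrCA subrr addr0; apply; lra.
Qed.

Lemma entropy_le_ln_card (R : realType) (I : finType) (A : {pred I}) (w : I -> R) :
  (forall i, i \in A -> 0 < w i) -> \sum_(i in A) w i = 1 ->
  - \sum_(i in A) w i * ln (w i) <= ln #|A|%:R.
Proof.
move=> w_gt0 w_sum1.
have card_gt0 : (0 < #|A|)%N.
  rewrite lt0n; apply/eqP => /card0_eq A0; move: w_sum1.
  by rewrite big_pred0 => [/esym/eqP|i]; rewrite ?oner_eq0 ?A0.
set n : R := #|A|%:R.
have n_gt0 : 0 < n by rewrite ltr0n.
(* Gibbs' inequality against the uniform weights: ln y <= y - 1 at y = 1 / (n w_i) *)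
have term i : i \in A -> - (w i * ln (w i)) - w i * ln n <= n^-1 - w i.
  move=> Ai; have w_gt0i := w_gt0 i Ai.
  have := ln_le_subr1 (divr_gt0 ltr01 (mulr_gt0 n_gt0 w_gt0i)).
  rewrite ln_div ?posrE ?mulr_gt0 // ln1 lnM ?posrE // sub0r => le_ln.
  have := ler_wpM2l (ltW w_gt0i) le_ln.
  have -> : w i * (1 / (n * w i) - 1) = n^-1 - w i.
    by field; rewrite !gt_eqF.
  lra.
have : \sum_(i in A) (- (w i * ln (w i)) - w i * ln n) <= \sum_(i in A) (n^-1 - w i).
  exact: ler_sum.
rewrite !sumrB sumrN -mulr_suml w_sum1 mul1r sumr_const -mulr_natr -/n.
by rewrite mulVf ?gt_eqF // subrr; lra.
Qed.

Section Softmax.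
Variables (R : realType) (I : finType) (A : {pred I}) (b : R) (s : I -> R).

Definition softmax (i : I) : R := expR (b * s i) / \sum_(j in A) expR (b * s j).

Variable i0 : I.
Hypothesis A_i0 : i0 \in A.

Lemma expR_le_partition : expR (b * s i0) <= \sum_(j in A) expR (b * s j).
Proof. by rewrite (bigD1 i0) //= lerDl sumr_ge0 // => j _; rewrite expR_ge0. Qed.

Lemma partition_gt0 : 0 < \sum_(j in A) expR (b * s j).
Proof. exact: lt_le_trans (expR_gt0 _) expR_le_partition. Qed.

Lemma softmax_gt0 i : 0 < softmax i.
Proof. by rewrite divr_gt0 ?expR_gt0 ?partition_gt0. Qed.

Lemma softmax_sum1 : \sum_(i in A) softmax i = 1.
Proof. by rewrite -mulr_suml divff // gt_eqF // partition_gt0. Qed.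

Lemma softmax_mean_ge : 0 < b ->
  s i0 - b^-1 * ln #|A|%:R <= \sum_(i in A) softmax i * s i.
Proof.
move=> b_gt0; set Z := \sum_(j in A) expR (b * s j).
have ln_softmax i : ln (softmax i) = b * s i - ln Z.
  by rewrite ln_div ?posrE ?expR_gt0 ?partition_gt0 // expRK.
have entropy : - \sum_(i in A) softmax i * ln (softmax i)
    = ln Z - b * \sum_(i in A) softmax i * s i.
  under eq_bigr do rewrite ln_softmax mulrBr.
  rewrite sumrB -mulr_suml softmax_sum1 mul1r mulr_sumr opprB.
  by congr (_ - _); apply: eq_bigr => i _; rewrite mulrCA.
have lnZ_ge : b * s i0 <= ln Z.
  by rewrite -[leLHS]expRK ler_ln ?posrE ?expR_gt0 ?partition_gt0 ?expR_le_partition.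
have := entropy_le_ln_card (fun i _ => softmax_gt0 i) softmax_sum1.
rewrite entropy => entropy_le.
by rewrite -(ler_pM2l b_gt0) mulrBr mulrA mulfV ?gt_eqF // mul1r; lra.
Qed.

End Softmax.

Lemma seqmin_mem (R : realType) (s : seq R) : s != [::] -> seqmin s \in s.
Proof.
have foldr_min_mem a t : foldr Num.min a t \in a :: t.
  elim: t => [|y t IH] /=; first exact: mem_head.
  rewrite minElt; case: ifP => _; first by rewrite !inE eqxx orbT.
  by move: IH; rewrite !inE => /orP[->|->]; rewrite ?orbT.
case: s => [|x s] // _; rewrite /seqmin /= minElt.
by case: ifP => _; [exact: mem_head | exact: foldr_min_mem].
Qed.

Lemma min_dist_attained (R : realType) (d N : nat) (k : 'I_N -> 'rV[R]_d)
    (z : 'rV[R]_d) :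
  (0 < N)%N -> exists j, min_dist k z = normv (k j - z).
Proof.
move=> N_gt0.
have : min_dist k z \in [seq normv (k i - z) | i <- enum 'I_N].
  by apply: seqmin_mem; rewrite -size_eq0 size_map size_enum_ord -lt0n.
by case/mapP => j _ ->; exists j.
Qed.

Section SoftmaxAttention.
Variables (R : realType) (d N : nat) (k : 'I_N -> 'rV[R]_d).
Variables (delta : 'rV[R]_d -> 'rV[R]_d) (z : 'rV[R]_d) (L : R).
Hypothesis delta_lip : forall i, normv (delta (k i) - delta z) <= L * normv (k i - z).

Local Notation score := (fun i => dotv (k i) z).

Lemma attn_err_le_wmean_dist (A : {pred 'I_N}) (w : 'I_N -> R) :
  (forall i, i \in A -> 0 <= w i) -> \sum_(i in A) w i = 1 ->
  normv (\sum_(i in A) w i *: delta (k i) - delta z)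
    <= L * \sum_(i in A) w i * normv (k i - z).
Proof.
move=> w_ge0 w_sum1; apply: le_trans (normv_wmean_sub _ _ w_ge0 w_sum1) _.
by rewrite mulr_sumr ler_sum // => i Ai; rewrite mulrCA ler_wpM2l ?w_ge0.
Qed.

Hypotheses (k_unit : forall i, normv (k i) = 1) (z_unit : normv z = 1).

Lemma normv_sub_sq_score i : normv (k i - z) ^+ 2 = 2 - 2 * score i.
Proof. by rewrite normvB_sq k_unit z_unit expr1n; ring. Qed.

Lemma normv_top_sub_le_min_dist (i0 : 'I_N) :
  (forall j, score j <= score i0) -> normv (k i0 - z) <= min_dist k z.
Proof.
move=> top.
have [j ->] := min_dist_attained k z (leq_ltn_trans (leq0n i0) (ltn_ord i0)).
rewrite -(ler_pXn2r (isT : (0 < 2)%N)) ?nnegrE ?normv_ge0 // !normv_sub_sq_score.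
by have := top j; lra.
Qed.

Lemma softmax_attn_err_le (A : {pred 'I_N}) (tau : R) (i0 : 'I_N) :
  0 < tau -> 0 <= L -> i0 \in A -> (forall j, score j <= score i0) ->
  normv (\sum_(i in A) softmax A tau^-1 score i *: delta (k i) - delta z)
    <= L * (min_dist k z + Num.sqrt (2 * tau * ln #|A|%:R)).
Proof.
move=> tau_gt0 L_ge0 A_i0 top; set w := softmax A tau^-1 score.
have w_ge0 i : i \in A -> 0 <= w i by move=> _; exact/ltW/(softmax_gt0 _ _ A_i0).
have w_sum1 : \sum_(i in A) w i = 1 := softmax_sum1 _ _ A_i0.
apply: le_trans (attn_err_le_wmean_dist w_ge0 w_sum1) _; rewrite ler_wpM2l //.
apply: le_trans (wmean_le_sqrt_wmean_sq (fun i => normv (k i - z)) w_ge0 w_sum1) _.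
have mean_sq : \sum_(i in A) w i * normv (k i - z) ^+ 2
    = 2 - 2 * \sum_(i in A) w i * score i.
  have -> : \sum_(i in A) w i * normv (k i - z) ^+ 2
      = \sum_(i in A) (2 * w i - 2 * (w i * score i)).
    by apply: eq_bigr => i _; rewrite normv_sub_sq_score; ring.
  by rewrite sumrB -!mulr_sumr w_sum1 mulr1.
have mean_ge : score i0 - tau * ln #|A|%:R <= \sum_(i in A) w i * score i.
  by have := softmax_mean_ge (b := tau^-1) score A_i0; rewrite invrK invr_gt0; apply.
have radius_ge0 : 0 <= 2 * tau * ln #|A|%:R.
  rewrite mulr_ge0 ?ln_ge0 ?ler1n ?mulr_ge0 ?ltW //; apply/card_gt0P; by exists i0.
apply: (@le_trans _ _ (Num.sqrt (normv (k i0 - z) ^+ 2 + 2 * tau * ln #|A|%:R))).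
  by rewrite mean_sq ler_wsqrtr // normv_sub_sq_score; lra.
apply: le_trans (sqrtrD_le (sqr_ge0 _) radius_ge0) _.
by rewrite sqrtr_sqr ger0_norm ?normv_ge0 // lerD2r normv_top_sub_le_min_dist.
Qed.

End SoftmaxAttention.

Theorem proposition3p6 (R : realType) (d N : nat) (k : 'I_N -> 'rV[R]_d)
    (delta : 'rV[R]_d -> 'rV[R]_d) (z : 'rV[R]_d) (tau L : R) :
  (0 < N)%N -> 0 < tau -> 0 <= L ->
  (forall i, normv (delta (k i) - delta z) <= L * normv (k i - z)) ->
  [/\ normv (attn_est tau^-1 k delta z - delta z)
        <= L * \sum_(i < N) softmax_w tau^-1 k z i * normv (k i - z),
      (forall i, normv (k i) = 1) -> normv z = 1 ->
        normv (attn_est tau^-1 k delta z - delta z)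
          <= L * (min_dist k z + Num.sqrt (2 * tau * ln (N%:R : R)))
    & forall (kk : nat) (S : {set 'I_N}),
        (0 < kk)%N -> is_topk kk S k z ->
        (forall i, normv (k i) = 1) -> normv z = 1 ->
        normv (attn_est_on S tau^-1 k delta z - delta z)
          <= L * (min_dist k z + Num.sqrt (2 * tau * ln (kk%:R : R)))].
Proof.
move=> N_gt0 tau_gt0 L_ge0 lip.
have [i0 _ top] := @arg_maxP _ _ _ (Ordinal N_gt0) predT (fun i => dotv (k i) z) isT.
split.
- apply: (attn_err_le_wmean_dist lip (A := predT)) => [i _|].
    exact/ltW/(softmax_gt0 _ _ (isT : i0 \in predT)).
  exact: (softmax_sum1 _ _ (isT : i0 \in predT)).
- move=> k_unit z_unit; rewrite -[X in ln X%:R](card_ord N).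
  by apply: softmax_attn_err_le => // j; apply: top.
- move=> kk S kk_gt0 [card_S top_S] k_unit z_unit.
  have /card_gt0P [i1 S_i1] : (0 < #|S|)%N by rewrite card_S.
  have [iS S_iS topS] := @arg_maxP _ _ _ i1 (mem S) (fun i => dotv (k i) z) S_i1.
  rewrite -card_S; apply: softmax_attn_err_le (S_iS) _ => // j.
  by case: (boolP (j \in S)) => [/topS | /(top_S _ _ S_iS)].
Qed.
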